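(* Let $G=(V,E)$ be a distance graph in $\mathbb{R}^d$ with $|V|=n$. Suppose there are $k\in\mathbb{N}$ and $\nu_0\in(0,1)$ such that every induced subgraph $G'=(V',E')$ of $G$ with $|V'|\ge[\nu_0 n]$ satisfies $\chi(G')>k$. Then for every family of Lebesgue measurable sets $S_1,\dots,S_k\subseteq\mathbb{R}^d$ such that $S=S_1\cup\dots\cup S_k$ has upper density $\nu\ge\nu_0$, and for every $a>0$, there exist an index $i\in\{1,\dots,k\}$ and points $\mathbf{x},\mathbf{y}\in S_i$ with $|\mathbf{x}-\mathbf{y}|=a$.
   Context: A distance graph in $\mathbb{R}^d$ is a finite graph $G=(V,E)$ with $V\subset\mathbb{R}^d$, $|V|<\infty$, and $E\subseteq\{\{\mathbf{x},\mathbf{y}\}\subseteq V:\ |\mathbf{x}-\mathbf{y}|=1\}$, where $|\cdot|$ is the Euclidean norm. $\chi$ denotes chromatic number, $[x]$ the integer part. The upper density of a measurable set $S\subseteq\mathbb{R}^d$ is $\limsup_{R\to\infty}\frac{\lambda(S\cap B_R)}{\lambda(B_R)}$, where $\lambda$ is Lebesgue measure and $B_R$ is the ball of radius $R$ centered at the origin. *)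

From HB Require Import structures.
From mathcomp Require Import all_boot all_order all_algebra.
From mathcomp Require Import finmap.
From mathcomp Require Import all_classical all_reals all_analysis.
Set Implicit Arguments. Unset Strict Implicit. Unset Printing Implicit Defensive.
Import Order.TTheory GRing.Theory Num.Theory.
Import numFieldNormedType.Exports numFieldTopology.Exports.
Local Open Scope classical_set_scope.
Local Open Scope ring_scope.

Section Defs.
Variables (R : realType) (d : nat).
Local Notation pt := 'rV[R]_d.

Definition eucl_norm (x : pt) : R := Num.sqrt (\sum_(i < d) x ord0 i ^+ 2).
Definition eucl_dist (x y : pt) : R := eucl_norm (x - y).

Definition eball (r : R) : set pt := [set x | eucl_norm x <= r].

Definition box (a b : pt) : set pt :=
  [set x | forall i : 'I_d, a ord0 i <= x ord0 i < b ord0 i].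
Definition box_vol (a b : pt) : R := \prod_(i < d) Num.max 0 (b ord0 i - a ord0 i).

Definition leb_outer (A : set pt) : \bar R :=
  ereal_inf [set (\sum_(0 <= k <oo) (box_vol (ab k).1 (ab k).2)%:E)%E
            | ab in [set ab : nat -> pt * pt |
                     A `<=` \bigcup_k box (ab k).1 (ab k).2]].

Definition leb_measurable (A : set pt) : Prop :=
  forall X : set pt, leb_outer X = (leb_outer (X `&` A) + leb_outer (X `&` ~` A))%E.

Definition upper_density (S : set pt) : \bar R :=
  limf_esup
    (fun r : (R : topologicalType) => (fine (leb_outer (S `&` eball r)) / fine (leb_outer (eball r)))%:E)
    (pinfty_nbhs R).

Definition distance_graph (V : {fset pt}) (E : pt -> pt -> Prop) : Prop :=
  (forall x y, E x y -> E y x) /\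
  (forall x y, E x y -> [/\ x \in V, y \in V & eucl_dist x y = 1]).
End Defs.

Definition colorable (T : choiceType) (V : {fset T}) (E : T -> T -> Prop) (c : nat) : Prop :=
  exists f : T -> nat, (forall x, x \in V -> (f x < c)%N) /\
    (forall x y, x \in V -> y \in V -> x <> y -> E x y -> f x <> f y).

Lemma colorable_ex (T : choiceType) (V : {fset T}) (E : T -> T -> Prop) :
  exists c, `[< colorable V E c >].
Proof.
exists (size (V : seq T)); apply/asboolP.
exists (fun x => index x V); split; first by move=> x; rewrite index_mem.
by move=> x y xV yV xy _ /(congr1 (nth x V)); rewrite !nth_index.
Qed.

Definition chromatic_number (T : choiceType) (V : {fset T}) (E : T -> T -> Prop) : nat :=
  ex_minn (colorable_ex V E).

From HB Require Import structures.
From mathcomp Require Import all_boot all_order all_algebra.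
From mathcomp Require Import finmap.
From mathcomp Require Import all_classical all_reals all_analysis.
From mathcomp Require Import ring lra.
Import Order.TTheory GRing.Theory Num.Theory.
Import numFieldNormedType.Exports numFieldTopology.Exports.
Local Open Scope classical_set_scope.
Local Open Scope ring_scope.

Set Implicit Arguments. Unset Strict Implicit. Unset Printing Implicit Defensive.

(** Suppose no S_i contains two points at distance a. For every t, colouring
    each vertex v of the copy t + a V with t + a v in S = S_1 ∪ ... ∪ S_k by
    the index of a class containing t + a v is a proper k-colouring of the
    subgraph it induces, so fewer than m = [ν₀ n] vertices of t + a V lie in
    S. Hence the n translates (S ∩ B_r) - a v, all inside B_(r+c), cover every
    point at most m - 1 times, and
      n λ(S ∩ B_r) <= (m - 1) λ(B_(r+c)) <= (m - 1) ((r + c) / r)^d λ(B_r).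
    Letting r -> ∞ bounds the upper density of S by (m - 1) / n < ν₀. *)

Lemma cauchy_schwarz (R : realFieldType) (I : finType) (f g : I -> R) :
  (\sum_i f i * g i) ^+ 2 <= (\sum_i f i ^+ 2) * (\sum_i g i ^+ 2).
Proof.
set X := \sum_i f i ^+ 2; set Y := \sum_i g i ^+ 2; set P := \sum_i f i * g i.
have Y_ge0 : 0 <= Y by apply: sumr_ge0 => i _; exact: sqr_ge0.
have [Y0|Y_gt0] := eqVneq Y 0.
  have g0 i : g i = 0.
    apply/eqP; rewrite -sqrf_eq0; apply/eqP/(psumr_eq0P _ Y0) => // j _.
    exact: sqr_ge0.
  rewrite /P big1 ?expr0n ?Y0 ?mulr0 // => i _; by rewrite g0 mulr0.
have lagrange : Y * (X * Y - P ^+ 2) = \sum_i (Y * f i - P * g i) ^+ 2.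
  have sq i : (Y * f i - P * g i) ^+ 2 =
      Y ^+ 2 * f i ^+ 2 - (2 * Y * P) * (f i * g i) + P ^+ 2 * g i ^+ 2 by ring.
  rewrite (eq_bigr _ (fun i _ => sq i)) big_split sumrB /= -!mulr_sumr -/X -/Y -/P.
  ring.
have : 0 <= Y * (X * Y - P ^+ 2).
  by rewrite lagrange; apply: sumr_ge0 => i _; exact: sqr_ge0.
by rewrite pmulr_rge0 ?lt_def ?Y_gt0 // subr_ge0.
Qed.

Lemma limf_esup_le (T : choiceType) (X : filteredType T) (R : realType)
    (f : X -> \bar R) (F : set_system X) (c : \bar R) :
  F [set x | (f x <= c)%E] -> (limf_esup f F <= c)%E.
Proof.
move=> Fc; rewrite limf_esupE; apply: ge_ereal_inf.
by exists (ereal_sup (f @` [set x | f x <= c]%E)); [exists [set x | f x <= c]%E|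
  apply: ge_ereal_sup => _ [x fx <-]].
Qed.

Section RealBounds.
Variable R : realType.

Lemma expr1D_le (x : R) n : 0 <= x <= 1 -> (1 + x) ^+ n <= 1 + 3 ^+ n * x.
Proof.
move=> /andP[x_ge0 x_le1]; elim: n => [|n IH]; first by rewrite !expr0 mul1r; lra.
have pow3_ge1 : 1 <= 3 ^+ n :> R by rewrite exprn_ege1 //; lra.
rewrite !exprS; apply: le_trans (ler_wpM2l _ IH) _; first lra.
have : 3 ^+ n * (x * x) <= 3 ^+ n * x by rewrite ler_wpM2l ?ler_piMr //; lra.
have : x <= 3 ^+ n * x by rewrite ler_peMl.
lra.
Qed.

(* Also when Y is infinite: then fine Y = 0 and division by 0 gives 0. *)
Lemma fine_div_le (Y Z : \bar R) (B n : R) : 0 <= B -> 0 < n ->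
  (0 <= Z)%E -> (Z <= Y)%E -> (n%:E * Z <= B%:E * Y)%E ->
  fine Z / fine Y <= B / n.
Proof.
move=> B_ge0 n_gt0 Z_ge0 ZY nZ_le.
have Bn_ge0 : 0 <= B / n by rewrite divr_ge0 // ltW.
case: Y ZY nZ_le => [y| |] //= ZY nZ_le; try by rewrite invr0 mulr0.
case: Z Z_ge0 ZY nZ_le => [z| |] //=; rewrite -!EFinM !lee_fin => z_ge0 zy nz_le.
have [y0|y_neq0] := eqVneq y 0; first by rewrite y0 invr0 mulr0.
have y_gt0 : 0 < y by rewrite lt_def y_neq0 (le_trans z_ge0 zy).
by rewrite ler_pdivrMr // mulrAC ler_pdivlMr // mulrC.
Qed.

Lemma limf_esup_pinfty_le (f : R -> R) (q c : R) (d : nat) :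
  0 <= q -> 0 <= c -> (forall r, 0 < r -> f r <= q * ((r + c) / r) ^+ d) ->
  (limf_esup (fun r => (f r)%:E) (pinfty_nbhs R) <= q%:E)%E.
Proof.
move=> q_ge0 c_ge0 f_le; apply/lee_addgt0Pr => e e_gt0; apply: limf_esup_le.
exists (1 + c + q * 3 ^+ d * c / e); split; first exact: num_real.
move=> r r_gt; rewrite /= lee_fin.
have qc_ge0 : 0 <= q * 3 ^+ d * c / e by rewrite divr_ge0 ?mulr_ge0 ?exprn_ge0 // ltW.
have r_gt0 : 0 < r by lra.
apply: le_trans (f_le r r_gt0) _.
rewrite mulrDl divff ?gt_eqF //.
have cr_le : 0 <= c / r <= 1.
  by rewrite divr_ge0 ?(ltW r_gt0) //= ler_pdivrMr // mul1r; lra.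
apply: le_trans (ler_wpM2l q_ge0 (expr1D_le d cr_le)) _.
have : q * 3 ^+ d * c / r <= e.
  by rewrite ler_pdivrMr // mulrC -ler_pdivrMl //; lra.
have -> : q * (1 + 3 ^+ d * (c / r)) = q + q * 3 ^+ d * c / r by ring.
lra.
Qed.

End RealBounds.

Section Euclidean.
Variables (R : realType) (d : nat).
Implicit Types (x y : 'rV[R]_d).

Lemma eucl_norm_ge0 x : 0 <= eucl_norm x.
Proof. exact: sqrtr_ge0. Qed.

Lemma eucl_normZ (c : R) x : eucl_norm (c *: x) = `|c| * eucl_norm x.
Proof.
rewrite /eucl_norm -sqrtr_sqr -sqrtrM ?sqr_ge0 // mulr_sumr.
by congr Num.sqrt; apply: eq_bigr => i _; rewrite mxE exprMn.
Qed.

Lemma eucl_normN x : eucl_norm (- x) = eucl_norm x.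
Proof. by rewrite -scaleN1r eucl_normZ normrN1 mul1r. Qed.

Lemma eucl_normD x y : eucl_norm (x + y) <= eucl_norm x + eucl_norm y.
Proof.
rewrite /eucl_norm.
set X := \sum_i x ord0 i ^+ 2; set Y := \sum_i y ord0 i ^+ 2.
set P := \sum_i x ord0 i * y ord0 i.
have X_ge0 : 0 <= X by apply: sumr_ge0 => i _; exact: sqr_ge0.
have Y_ge0 : 0 <= Y by apply: sumr_ge0 => i _; exact: sqr_ge0.
have -> : \sum_i (x + y) ord0 i ^+ 2 = X + 2 * P + Y.
  have sq i : (x + y) ord0 i ^+ 2 =
      x ord0 i ^+ 2 + 2 * (x ord0 i * y ord0 i) + y ord0 i ^+ 2.
    by rewrite mxE; ring.
  by rewrite (eq_bigr _ (fun i _ => sq i)) !big_split /= -mulr_sumr.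
have P_le : P <= Num.sqrt X * Num.sqrt Y.
  rewrite -sqrtrM // (le_trans (ler_norm P)) // -sqrtr_sqr ler_sqrt ?mulr_ge0 //.
  exact: cauchy_schwarz.
have sum_ge0 : 0 <= Num.sqrt X + Num.sqrt Y by rewrite addr_ge0 ?sqrtr_ge0.
rewrite -(ger0_norm sum_ge0) -sqrtr_sqr ler_sqrt ?sqr_ge0 // sqrrD !sqr_sqrtr //.
lra.
Qed.

End Euclidean.

Section LebesgueOuter.
Variables (R : realType) (d : nat).
Local Notation pt := 'rV[R]_d.
Local Notation lo := (@leb_outer R d).
Implicit Types (A B : set pt) (t : pt).

Lemma box_vol_ge0 (a b : pt) : 0 <= box_vol a b.
Proof. by apply: prodr_ge0 => i _; rewrite le_max lexx. Qed.

Lemma leb_outer_ge0 A : (0 <= lo A)%E.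
Proof.
apply: le_ereal_inf_tmp => _ [ab _ <-]; apply: nneseries_ge0 => n _ _.
by rewrite lee_fin box_vol_ge0.
Qed.

Lemma le_leb_outer A B : A `<=` B -> (lo A <= lo B)%E.
Proof.
move=> AB; apply: ereal_inf_le_tmp => _ [ab cover <-]; exists ab => //.
exact: subset_trans cover.
Qed.

Lemma leb_outer0 : (0 < d)%N -> lo set0 = 0%E.
Proof.
move=> d_gt0; apply/eqP; rewrite eq_le leb_outer_ge0 andbT; apply: ge_ereal_inf.
exists 0%E => //; exists (fun _ => (0, 0)) => //.
apply: eseries0 => n _ _ /=; congr (_%:E).
by rewrite /box_vol (bigD1 (Ordinal d_gt0)) //= subrr maxxx mul0r.
Qed.

Definition translate t A : set pt := [set x | A (x - t)].

Lemma translateK t : cancel (translate t) (translate (- t)).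
Proof. by move=> A; apply/funext => x; rewrite /translate /= opprK addrK. Qed.

Lemma leb_outer_translate_le t A : (lo (translate t A) <= lo A)%E.
Proof.
apply: ereal_inf_le_tmp => _ [ab cover <-].
exists (fun n => ((ab n).1 + t, (ab n).2 + t)).
  move=> x /cover [n _ /= inbox]; exists n => //= i.
  by have := inbox i; rewrite !mxE => /andP[lo_x x_hi]; apply/andP; split; lra.
congr (limn _); apply/funext => N; apply: eq_bigr => n _; congr (_%:E).
by apply: eq_bigr => i _ /=; rewrite !mxE; congr (Num.max _ _); ring.
Qed.

Lemma leb_outer_translate t A : lo (translate t A) = lo A.
Proof.
apply/eqP; rewrite eq_le leb_outer_translate_le /=.
by rewrite -{1}(translateK t A) leb_outer_translate_le.
Qed.

Lemma leb_measurable_translate t A :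
  leb_measurable A -> leb_measurable (translate t A).
Proof.
move=> mA X; rewrite -(leb_outer_translate (- t) X) (mA (translate (- t) X)).
have transI B : translate (- t) X `&` B = translate (- t) (X `&` translate t B).
  by apply/funext => x; rewrite /translate /= opprK addrK.
by rewrite !transI !leb_outer_translate; congr (lo (X `&` _) + _)%E;
  apply/funext => x; rewrite /translate.
Qed.

Definition dilate (s : R) A : set pt := [set x | A (s^-1 *: x)].

Lemma leb_outer_dilate_le (s : R) A : 0 < s ->
  (lo (dilate s A) <= (s ^+ d)%:E * lo A)%E.
Proof.
move=> s_gt0; have sd_gt0 : 0 < s ^+ d by rewrite exprn_gt0.
rewrite -lee_pdivrMl //; apply: le_ereal_inf_tmp => _ [ab cover <-].
rewrite lee_pdivrMl // -nneseriesZl; last by move=> n _; rewrite lee_fin box_vol_ge0.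
set sab := fun n => (s *: (ab n).1, s *: (ab n).2).
have -> : (\sum_(0 <= n <oo) (s ^+ d)%:E * (box_vol (ab n).1 (ab n).2)%:E
           = \sum_(0 <= n <oo) (box_vol (sab n).1 (sab n).2)%:E)%E.
  congr (limn _); apply/funext => N; apply: eq_bigr => n _; rewrite -EFinM.
  congr (_%:E); rewrite -[d in s ^+ d]card_ord -prodr_const /box_vol -big_split /=.
  by apply: eq_bigr => i _; rewrite !mxE -mulrBr maxr_pMr ?ltW // mulr0.
apply: ereal_inf_lbound; exists sab => //= x /cover [n _ /= inbox]; exists n => //= i.
have := inbox i; rewrite !mxE => /andP[lo_x x_hi].
by rewrite -ler_pdivlMl // -ltr_pdivrMl // lo_x x_hi.
Qed.

Lemma eball_dilate (s r : R) :
  0 < s -> @eball R d (s * r) = dilate s (@eball R d r).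
Proof.
move=> s_gt0; apply/funext => x; apply/propext; rewrite /eball /dilate /=.
by rewrite eucl_normZ ger0_norm ?invr_ge0 ?(ltW s_gt0) // ler_pdivrMl.
Qed.

End LebesgueOuter.

(* Every box in R^0 has volume 1 (an empty product), so every countable cover
   has infinite total volume, even for the empty set. *)
Lemma leb_outer_dim0 (R : realType) (A : set 'rV[R]_0) : leb_outer A = +oo%E.
Proof.
apply/eqP; rewrite eq_le leey /=; apply: le_ereal_inf_tmp => _ [ab _ <-].
set u := (\sum_(0 <= n <oo) _)%E.
have u_ge n : (n%:R%:E <= u)%E.
  apply: le_trans (nneseries_lim_ge n _).
    2: by move=> i _ _; rewrite lee_fin box_vol_ge0.
  rewrite /box_vol; under eq_bigr do rewrite big_ord0.
  by rewrite sumEFin sumr_const_nat subn0.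
move: u_ge; case: u => [r| |] //= u_ge.
- by have := u_ge (Num.truncn r).+1; rewrite lee_fin leNgt truncnS_gt.
- by have := u_ge 0%N.
Qed.

Lemma upper_density_dim0_le (R : realType) (A : set 'rV[R]_0) :
  (upper_density A <= 0)%E.
Proof.
apply: limf_esup_le; exists 0; split => [|r _]; first exact: num_real.
by rewrite /= !leb_outer_dim0 /= invr0 mulr0.
Qed.

Section CoverCount.
Variables (R : realType) (T : Type) (mu : set T -> \bar R).
Hypotheses (mu0 : mu set0 = 0%E) (mu_ge0 : forall A, (0 <= mu A)%E).
Local Notation cup l := (\big[setU/set0]_(A <- l) A).

Definition cover_count (L : seq (seq (set T))) (x : T) : nat :=
  count (fun l => `[< cup l x >]) L.

(* Only the sets listed in L are assumed measurable, not their unions: the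
   proof peels the sets off one by one, cutting X along each of them. *)
Lemma sume_setI_le_cover_count (L : seq (seq (set T))) (X : set T) (k : nat) :
  (forall l A, l \in L -> A \in l -> mu.-caratheodory A) ->
  (forall x, X x -> (cover_count L x <= k)%N) ->
  (\sum_(l <- L) mu (X `&` cup l) <= k%:R%:E * mu X)%E.
Proof.
elim: L X k => [|l L IHL] X k meas cnt.
  by rewrite big_nil mule_ge0 ?lee_fin.
have measL l' B : l' \in L -> B \in l' -> mu.-caratheodory B.
  by move=> l'L; apply: meas; rewrite in_cons l'L orbT.
elim: l X k meas cnt => [|A l IHl] X k meas cnt.
  rewrite big_cons big_nil setI0 mu0 add0e; apply: IHL => // x /cnt.
  by rewrite /cover_count /= big_nil asboolF.
have mA : mu.-caratheodory A by apply: (meas (A :: l)); rewrite mem_head.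
have splitA l0 : mu (X `&` cup l0) =
    (mu ((X `&` A) `&` cup l0) + mu ((X `&` ~` A) `&` cup l0))%E.
  by rewrite (mA (X `&` cup l0)) (setIAC X _ A) (setIAC X _ (~` A)).
rewrite (eq_bigr _ (fun l0 _ => splitA l0)) big_split (mA X) ge0_muleDr //.
rewrite !big_cons /=; apply: leeD.
- have -> : (X `&` A) `&` (A `|` cup l) = X `&` A.
    by rewrite -setIA setIUr setIid setUidl // => x [].
  case: k cnt => [|k] cnt.
    have -> : X `&` A = set0.
      apply/seteqP; split => // x [Xx Ax]; have := cnt x Xx.
      by rewrite /cover_count /= asboolT // big_cons; left.
    by rewrite mu0 mule0 add0e big1 // => l0 _; rewrite set0I mu0.
  rewrite -natr1 EFinD ge0_muleDl ?lee_fin // mul1e addeC leeD2r //.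
  apply: IHL => // x [Xx Ax]; have := cnt x Xx.
  by rewrite /cover_count /= asboolT // big_cons; left.
- have -> : (X `&` ~` A) `&` (A `|` cup l) = (X `&` ~` A) `&` cup l.
    by rewrite setIUr -setIA setICl setI0 set0U.
  have := IHl (X `&` ~` A) k; rewrite big_cons; apply.
  + move=> l0 B; rewrite in_cons => /orP[/eqP-> Bl|l0L]; last exact: measL.
    by apply: (meas (A :: l)); rewrite ?mem_head // in_cons Bl orbT.
  + move=> x [Xx nAx]; have := cnt x Xx.
    by rewrite /cover_count /= big_cons asbool_or (asboolF nAx).
Qed.

End CoverCount.

Section TranslateCount.
Variables (R : realType) (d : nat) (I : finType) (S : I -> set 'rV[R]_d).
Hypothesis S_meas : forall i, leb_measurable (S i).
Local Notation pt := 'rV[R]_d.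
Local Notation lo := (@leb_outer R d).
Local Notation SS := (\bigcup_(i in setT) S i).

Lemma bigsetU_translate (t : pt) :
  \big[setU/set0]_(A <- map (fun i => translate t (S i)) (enum I)) A =
  translate t SS.
Proof.
rewrite big_map -bigcup_seq; apply/seteqP; split=> x [i _ Six]; exists i => //=.
by rewrite mem_enum.
Qed.

(* Each x lies in translate (- u) SS for at most h of the shifts u, so the
   |U| translates of SS `&` B, all inside B', overlap at most h times. *)
Lemma leb_outer_translates_le (U : seq pt) (B B' : set pt) (h : nat) :
  (0 < d)%N -> (forall u, u \in U -> translate (- u) B `<=` B') ->
  (forall x, B' x -> (count (fun u => `[< SS (x + u)%R >]) U <= h)%N) ->
  ((size U)%:R%:E * lo (SS `&` B) <= h%:R%:E * lo B')%E.
Proof.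
move=> d_gt0 BB' cnt.
pose L := map (fun u => map (fun i => translate (- u) (S i)) (enum I)) U.
have L_meas l A : l \in L -> A \in l -> (@leb_outer R d).-caratheodory A.
  by case/mapP=> u _ -> /mapP[i _ ->]; exact: leb_measurable_translate.
have -> : ((size U)%:R%:E * lo (SS `&` B) = \sum_(u <- U) lo (SS `&` B))%E.
  by rewrite big_const_seq count_predT iter_addr addr0 mule_natl.
apply: (le_trans _ (sume_setI_le_cover_count (leb_outer0 R d_gt0)
  (@leb_outer_ge0 R d) (X := B') (k := h) L_meas _)).
- rewrite big_map !big_seq; apply: lee_sum => u uU.
  rewrite bigsetU_translate -(leb_outer_translate (- u)); apply: le_leb_outer.
  by move=> x [SSx Bx]; split; [exact: BB' uU x Bx | exact: SSx].
- move=> x B'x; rewrite /cover_count count_map; apply: leq_trans (cnt x B'x).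
  by apply/eq_leq/eq_count => u /=; rewrite bigsetU_translate /translate /= opprK.
Qed.

Lemma upper_density_le_translate_count (U : seq pt) (h : nat) :
  (0 < d)%N -> (0 < size U)%N ->
  (forall x, (count (fun u => `[< SS (x + u)%R >]) U <= h)%N) ->
  (upper_density SS <= (h%:R / (size U)%:R)%:E)%E.
Proof.
move=> d_gt0 U_gt0 cnt; pose c := \sum_(u <- U) eucl_norm u.
have c_ge0 : 0 <= c by apply: sumr_ge0 => u _; exact: eucl_norm_ge0.
have le_c u : u \in U -> eucl_norm u <= c.
  move=> uU; rewrite /c (big_rem u uU) /= lerDl sumr_ge0 // => v _.
  exact: eucl_norm_ge0.
apply: (limf_esup_pinfty_le _ c_ge0) => [|r r_gt0]; first by rewrite divr_ge0.
set s := (r + c) / r; have s_gt0 : 0 < s by rewrite divr_gt0 //; lra.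
rewrite mulrAC; apply: fine_div_le; rewrite ?mulr_ge0 ?exprn_ge0 ?ltr0n ?(ltW s_gt0) //.
- exact: leb_outer_ge0.
- by apply: le_leb_outer; exact: subIsetr.
apply: le_trans (leb_outer_translates_le (B := @eball R d r)
  (B' := @eball R d (r + c)) (h := h) d_gt0 _ (fun x _ => cnt x)) _.
  move=> u uU x; rewrite /translate /eball /= opprK => xu_le.
  rewrite -(addrK u x); apply: le_trans (eucl_normD _ _) _.
  by rewrite eucl_normN; have := le_c u uU; lra.
rewrite EFinM -muleA lee_wpmul2l ?lee_fin //.
have -> : r + c = s * r by rewrite /s divfK // gt_eqF.
by rewrite eball_dilate //; exact: leb_outer_dilate_le.
Qed.

End TranslateCount.

Lemma chromatic_number_le (T : choiceType) (V : {fset T}) (E : T -> T -> Prop) c :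
  colorable V E c -> (chromatic_number V E <= c)%N.
Proof.
by move=> col; rewrite /chromatic_number; case: ex_minnP => m _; apply; exact/asboolP.
Qed.

Section TranslatedGraph.
Variables (R : realType) (d : nat) (V : {fset 'rV[R]_d}).
Variables (E : 'rV[R]_d -> 'rV[R]_d -> Prop) (k : nat).
Variables (S : 'I_k -> set 'rV[R]_d) (a : R).
Hypotheses (E_unit : forall x y, E x y -> eucl_dist x y = 1) (a_gt0 : 0 < a).
Hypothesis no_mono : forall i x y, S i x -> S i y -> eucl_dist x y <> a.
Local Notation SS := (\bigcup_(i in setT) S i).

Definition translate_hits (t : 'rV[R]_d) : seq 'rV[R]_d :=
  [seq v <- V | `[< SS (t + a *: v) >]].

(* Colour v by the first class S i containing t + a v; an edge of colour i
   would give two points of S i at distance a. *)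
Lemma colorable_translate_hits t : colorable (seq_fset tt (translate_hits t)) E k.
Proof.
pose f v := if [pick i | `[< S i (t + a *: v) >]] is Some i then val i else 0%N.
have hit v : v \in seq_fset tt (translate_hits t) -> exists i, S i (t + a *: v).
  by rewrite seq_fsetE mem_filter => /andP[/asboolP[i _ Si] _]; exists i.
exists f; split.
  move=> v /hit[i Si]; rewrite /f; case: pickP => [j _|/(_ i)]; first exact: ltn_ord.
  by rewrite asboolT.
move=> x y /hit[i Six] /hit[j Sjy] _ Exy; rewrite /f.
case: pickP => [{}i /asboolP {}Six|/(_ i)]; last by rewrite asboolT.
case: pickP => [{}j /asboolP {}Sjy|/(_ j)]; last by rewrite asboolT.
move/val_inj => eq_ij; rewrite -eq_ij in Sjy; apply: no_mono Six Sjy _.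
rewrite /eucl_dist opprD addrACA subrr add0r -scalerBr eucl_normZ gtr0_norm //.
by have := E_unit Exy; rewrite /eucl_dist => ->; rewrite mulr1.
Qed.

Lemma count_translate_hits_lt (m : nat) :
  (forall V', fsubset V' V -> (m <= #|` V'|)%N -> (k < chromatic_number V' E)%N) ->
  forall t, (count (fun v => `[< SS (t + a *: v)%R >]) V < m)%N.
Proof.
move=> chiV t; rewrite ltnNge; apply/negP => m_le.
have card_hits :
    #|` seq_fset tt (translate_hits t)| = count (fun v => `[< SS (t + a *: v) >]) V.
  by rewrite size_seq_fset undup_id ?filter_uniq ?fset_uniq // size_filter.
have sub_hits : fsubset (seq_fset tt (translate_hits t)) V.
  by apply/fsubsetP => v; rewrite seq_fsetE mem_filter => /andP[].
have := chiV _ sub_hits; rewrite card_hits => /(_ m_le).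
by rewrite ltnNge chromatic_number_le //; exact: colorable_translate_hits.
Qed.

End TranslatedGraph.

Theorem theorem8 (R : realType) (d : nat) (V : {fset 'rV[R]_d})
    (E : 'rV[R]_d -> 'rV[R]_d -> Prop) (k : nat) (nu0 : R) :
  distance_graph V E ->
  0 < nu0 < 1 ->
  (forall V' : {fset 'rV[R]_d}, fsubset V' V ->
     (Num.truncn (nu0 * (#|` V|)%fset%:R) <= (#|` V'|)%fset)%N ->
     (k < chromatic_number V' E)%N) ->
  forall S : 'I_k -> set 'rV[R]_d,
    (forall i, leb_measurable (S i)) ->
    (nu0%:E <= upper_density (\bigcup_(i in setT) S i))%E ->
  forall a : R, 0 < a ->
    exists i : 'I_k, exists x y : 'rV[R]_d, S i x /\ S i y /\ eucl_dist x y = a.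
Proof.
move=> [_ E_unit] /andP[nu0_gt0 _] chiV S S_meas dens a a_gt0.
apply: contrapT => no_pair.
have no_mono i x y : S i x -> S i y -> eucl_dist x y <> a.
  by move=> Six Siy dxy; apply: no_pair; exists i, x, y.
have [d0|d_gt0] := posnP d.
  by subst d; have := le_trans dens (upper_density_dim0_le _); rewrite lee_fin; lra.
set n := #|` V|%fset; set m := Num.truncn (nu0 * n%:R).
have E_dist x y : E x y -> eucl_dist x y = 1 by case/E_unit.
have hits_lt := count_translate_hits_lt E_dist a_gt0 no_mono chiV.
have m_gt0 : (0 < m)%N := leq_ltn_trans (leq0n _) (hits_lt 0).
have m_le : m%:R <= nu0 * n%:R by rewrite truncn_le mulr_ge0 // ltW.
have n_gt0 : (0 < n)%N.
  by rewrite lt0n; apply: contraTneq m_le => ->; rewrite mulr0 -ltNge ltr0n.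
have hits_le x : (count (fun u => `[< (\bigcup_(i in setT) S i) (x + u)%R >])
                    (map (fun v => a *: v) V) <= m.-1)%N.
  by rewrite count_map -ltnS prednK //; exact: hits_lt.
have := upper_density_le_translate_count S_meas d_gt0 _ hits_le.
rewrite size_map => /(_ n_gt0) dens_le.
have := le_trans dens dens_le; rewrite lee_fin ler_pdivlMr ?ltr0n //.
rewrite -(prednK m_gt0) -natr1 in m_le; lra.
Qed.
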